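(* Let $\Gamma$ be a distance-regular graph with diameter $D\ge3$ and valency $k$, which is neither bipartite nor almost bipartite. Let $\theta,\theta'$ be real numbers other than $k$ such that the pair $\theta,\theta'$ is tight. Then $\theta\neq\theta'$.
   Context: $\Gamma$ is a finite connected undirected graph without loops or multiple edges, distance-regular with diameter $D$, intersection numbers $a_i,b_i,c_i$ ($c_0=0$, $b_D=0$), valency $k$, $c_i+a_i+b_i=k$. Bipartite: $a_i=0$ for $0\le i\le D$; almost bipartite: $a_D\ne0$ and $a_i=0$ for $0\le i\le D-1$. For $\theta\in\mathbb{R}$ the pseudo cosine sequence for $\theta$ is the sequence of reals $\sigma_0,\dots,\sigma_D$ with $\sigma_0=1$ and $c_i\sigma_{i-1}+a_i\sigma_i+b_i\sigma_{i+1}=\theta\sigma_i$ for $0\le i\le D-1$. Reals $\theta,\theta'$ form a tight pair if, with $\sigma_i$, $\rho_i$ their pseudo cosine sequences, $(\sigma_i\rho_i)_{i=0}^D$ is a pseudo cosine sequence. *)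

From HB Require Import structures.
From mathcomp Require Import all_boot all_order all_algebra.
From mathcomp Require Import reals.
Set Implicit Arguments. Unset Strict Implicit. Unset Printing Implicit Defensive.
Import Order.TTheory GRing.Theory Num.Theory.

Section Graph.
Variables (T : finType) (adj : rel T).

Definition simple_graph : Prop :=
  symmetric adj /\ irreflexive adj.

Fixpoint ball (x : T) (n : nat) : {set T} :=
  match n with
  | 0 => [set x]
  | n'.+1 => ball x n' :|: [set z | [exists y in ball x n', adj y z]]
  end.

Definition connected_graph : Prop := forall x y : T, y \in ball x #|T|.

Definition dist (x y : T) : nat := find (fun n => y \in ball x n) (iota 0 #|T|.+1).

Definition diameter : nat := \max_(x : T) \max_(y : T) dist x y.

Definition regular_valency (k : nat) : Prop :=
  forall x : T, #|[set y | adj x y]| = k.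

Definition distance_regular_with (D : nat) (a b c : nat -> nat) : Prop :=
  forall i x y, i <= D -> dist x y = i ->
    [/\ #|[set z | adj y z & (dist x z).+1 == i]| = c i,
        #|[set z | adj y z & dist x z == i]| = a i &
        #|[set z | adj y z & dist x z == i.+1]| = b i].

Definition is_drg (D k : nat) (a b c : nat -> nat) : Prop :=
  [/\ simple_graph, connected_graph, diameter = D, regular_valency k
    & distance_regular_with D a b c].
End Graph.

Definition bipartite_params (D : nat) (a : nat -> nat) : Prop :=
  forall i, i <= D -> a i = 0.

Definition almost_bipartite_params (D : nat) (a : nat -> nat) : Prop :=
  a D <> 0 /\ forall i, i < D -> a i = 0.

Local Open Scope ring_scope.

Definition pseudo_cosine (R : realType) (D : nat) (a b c : nat -> nat)
    (theta : R) (sigma : nat -> R) : Prop :=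
  sigma 0%N = 1 /\
  forall i : nat, (i < D)%N ->
    (c i)%:R * sigma i.-1 + (a i)%:R * sigma i + (b i)%:R * sigma i.+1
      = theta * sigma i.

Definition tight_pair (R : realType) (D : nat) (a b c : nat -> nat)
    (theta theta' : R) : Prop :=
  exists sigma rho : nat -> R,
    [/\ pseudo_cosine D a b c theta sigma,
        pseudo_cosine D a b c theta' rho &
        exists eta : R, pseudo_cosine D a b c eta (fun i => sigma i * rho i)].

From HB Require Import structures.
From mathcomp Require Import all_boot all_order all_algebra.
From mathcomp Require Import reals.
From mathcomp Require Import zify ring.
Import Order.TTheory GRing.Theory Num.Theory.

(* If theta = theta', the recurrence (with b_i > 0) makes both pseudo cosine
   sequences equal to one sequence sigma, and then sigma^2 is a pseudo cosine
   sequence for some eta.  Evaluating at i = 0 gives theta = k sigma_1 and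
   eta = k sigma_1^2.  As Gamma is neither bipartite nor almost bipartite,
   a_i <> 0 for some 0 < i < D.  At such an i, with the weights c_i, a_i, b_i
   (summing to k), the weighted mean of (sigma_{i-1}, sigma_i, sigma_{i+1}) is
   sigma_1 sigma_i and the weighted mean of their squares is its square, so the
   weighted variance vanishes: the three values are equal.  Then
   k sigma_i = theta sigma_i with theta <> k, so sigma_{i-1} = sigma_i = 0, and
   since c_j > 0 two consecutive zeros propagate down to sigma_0 = 0, although
   sigma_0 = 1. *)

Set Implicit Arguments.
Unset Strict Implicit.
Unset Printing Implicit Defensive.

Section Distance.
Variables (T : finType) (adj : rel T).
Hypothesis conn : connected_graph adj.

Lemma sub_ball x m n : m <= n -> ball adj x m \subset ball adj x n.
Proof.
elim: n => [|n IHn]; first by rewrite leqn0 => /eqP ->.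
rewrite leq_eqVlt => /predU1P [-> // | /IHn sub_mn].
exact: subset_trans sub_mn (subsetUl _ _).
Qed.

Let dist_has x y : has (fun n => y \in ball adj x n) (iota 0 #|T|.+1).
Proof. by apply/hasP; exists #|T|; rewrite ?mem_iota ?add0n ?ltnSn. Qed.

Lemma dist_ltS_card x y : dist adj x y < #|T|.+1.
Proof. by have := dist_has x y; rewrite has_find size_iota. Qed.

Lemma ball_dist x y : y \in ball adj x (dist adj x y).
Proof.
by have := nth_find 0 (dist_has x y); rewrite nth_iota ?add0n ?dist_ltS_card.
Qed.

Lemma mem_ball x y n : (y \in ball adj x n) = (dist adj x y <= n).
Proof.
apply/idP/idP => [y_in | /sub_ball/subsetP-> //]; last exact: ball_dist.
rewrite leqNgt; apply/negP => lt_n_dist.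
have n_lt_card : n < #|T|.+1 by have := dist_ltS_card x y; lia.
by have := before_find 0 lt_n_dist; rewrite nth_iota // add0n y_in.
Qed.

Lemma dist_eq0 x y : (dist adj x y == 0) = (y == x).
Proof. by rewrite -leqn0 -mem_ball inE. Qed.

Lemma dist_adj_leS x y z : adj y z -> dist adj x z <= (dist adj x y).+1.
Proof.
move=> adj_yz; rewrite -mem_ball /= inE; apply/orP; right; rewrite inE.
by apply/existsP; exists y; rewrite ball_dist adj_yz.
Qed.

Lemma dist_predS x y n :
  dist adj x y = n.+1 -> exists2 w, adj w y & dist adj x w = n.
Proof.
move=> dist_xy; have := ball_dist x y; rewrite dist_xy /= => /setUP [].
  by rewrite mem_ball dist_xy ltnn.
rewrite inE => /existsP [w /andP [w_in adj_wy]]; exists w => //.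
by rewrite mem_ball in w_in; have := dist_adj_leS x adj_wy; lia.
Qed.

Lemma dist_intermediate x y i :
  i <= dist adj x y -> exists w, dist adj x w = i.
Proof.
move dist_xy: (dist adj x y) => n; elim: n y dist_xy => [|n IHn] y dist_xy.
  by rewrite leqn0 => /eqP ->; exists y.
rewrite leq_eqVlt => /predU1P [-> | lt_i]; first by exists y.
by have [w _ /IHn] := dist_predS dist_xy; apply.
Qed.

Lemma exists_dist_diameter :
  0 < diameter adj -> exists x y, dist adj x y = diameter adj.
Proof.
move=> diam_gt0; have T_gt0 : 0 < #|T|.
  rewrite lt0n; apply: contraTneq diam_gt0 => /card0_eq T0.
  by rewrite /diameter big_pred0.
rewrite /diameter; have [x ->] := bigop.eq_bigmax (fun x => \max_y dist adj x y) T_gt0.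
by have [y ->] := bigop.eq_bigmax (dist adj x) T_gt0; exists x, y.
Qed.

Lemma exists_dist_eq i :
  0 < diameter adj -> i <= diameter adj -> exists x y, dist adj x y = i.
Proof.
move=> /exists_dist_diameter [x [y dist_xy]]; rewrite -dist_xy.
by move=> /dist_intermediate [w dist_xw]; exists x, w.
Qed.

End Distance.

Section IntersectionNumbers.
Variables (T : finType) (adj : rel T) (D k : nat) (a b c : nat -> nat).
Hypotheses (adj_sym : symmetric adj) (adj_irr : irreflexive adj).
Hypotheses (conn : connected_graph adj) (diam : diameter adj = D).
Hypotheses (reg : regular_valency adj k) (drg : distance_regular_with adj D a b c).
Hypothesis D_gt0 : 0 < D.

Let exists_dist i : i <= D -> exists x y, dist adj x y = i.
Proof. by rewrite -diam; apply: exists_dist_eq; rewrite ?diam. Qed.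

Lemma intersection_c0 : c 0 = 0.
Proof.
have [x [y dist_xy]] := exists_dist (leq0n D).
have [<- _ _] := drg (leq0n D) dist_xy.
by apply/eqP; rewrite cards_eq0; apply/eqP/setP => z; rewrite !inE andbF.
Qed.

Lemma intersection_a0 : a 0 = 0.
Proof.
have [x [y dist_xy]] := exists_dist (leq0n D).
have [_ <- _] := drg (leq0n D) dist_xy.
move/eqP: dist_xy; rewrite (dist_eq0 conn) => /eqP ->.
apply/eqP; rewrite cards_eq0; apply/eqP/setP => z; rewrite !inE (dist_eq0 conn).
by have [-> | _] := eqVneq z x; rewrite ?adj_irr ?andbF.
Qed.

Lemma intersection_sum i : i <= D -> c i + a i + b i = k.
Proof.
move=> le_iD; have [x [y dist_xy]] := exists_dist le_iD.
have [<- <- <-] := drg le_iD dist_xy.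
rewrite -(reg y) -!sum1dep_card !(big_mkcondr _ _ (adj y)) -!big_split /=.
apply: eq_bigr => z adj_yz.
have := dist_adj_leS conn x adj_yz.
have := dist_adj_leS conn x (etrans (adj_sym z y) adj_yz).
rewrite dist_xy.
by do 3 case: eqP => /=; lia.
Qed.

Lemma intersection_b_gt0 i : i < D -> 0 < b i.
Proof.
move=> lt_iD; have [x [w dist_xw]] := exists_dist lt_iD.
have [y adj_yw dist_xy] := dist_predS conn dist_xw.
have [_ _ <-] := drg (ltnW lt_iD) dist_xy.
by apply/card_gt0P; exists w; rewrite inE adj_yw dist_xw eqxx.
Qed.

Lemma intersection_c_gt0 i : 0 < i <= D -> 0 < c i.
Proof.
case: i => // i /= le_iD; have [x [w dist_xw]] := exists_dist le_iD.
have [y adj_yw dist_xy] := dist_predS conn dist_xw.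
have [<- _ _] := drg le_iD dist_xw.
by apply/card_gt0P; exists y; rewrite inE adj_sym adj_yw dist_xy eqxx.
Qed.

End IntersectionNumbers.

Local Open Scope ring_scope.

Lemma weighted_variance3_eq0 (R : realDomainType) (A B C p q r : R) :
  0 < A -> 0 < B -> 0 < C ->
  (A + B + C) * (A * p ^+ 2 + B * q ^+ 2 + C * r ^+ 2)
    = (A * p + B * q + C * r) ^+ 2 ->
  p = q /\ q = r.
Proof.
move=> A_gt0 B_gt0 C_gt0 /eqP; rewrite -subr_eq0.
have -> : (A + B + C) * (A * p ^+ 2 + B * q ^+ 2 + C * r ^+ 2)
            - (A * p + B * q + C * r) ^+ 2
          = A * B * (p - q) ^+ 2 + (B * C * (q - r) ^+ 2 + A * C * (p - r) ^+ 2).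
  by ring.
have wsqr_ge0 (W X : R) : 0 < W -> 0 <= W * X ^+ 2.
  by move=> W_gt0; rewrite mulr_ge0 ?sqr_ge0 ?ltW.
rewrite paddr_eq0 ?addr_ge0 ?wsqr_ge0 ?mulr_gt0 // paddr_eq0 ?wsqr_ge0 ?mulr_gt0 //.
rewrite !mulf_eq0 (gt_eqF A_gt0) (gt_eqF B_gt0) (gt_eqF C_gt0) /= !orbb.
by rewrite !subr_eq0 => /and3P [/eqP -> /eqP ->].
Qed.

Section PseudoCosine.
Variables (R : realType) (D k : nat) (a b c : nat -> nat).

Lemma eq_pseudo_cosine (theta : R) (sigma tau : nat -> R) :
  (forall i, (i <= D)%N -> sigma i = tau i) ->
  pseudo_cosine D a b c theta sigma -> pseudo_cosine D a b c theta tau.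
Proof.
move=> eq_st [sigma0 rec_sigma]; split=> [|i lt_iD]; first by rewrite -eq_st.
rewrite -!eq_st //;
  [exact: rec_sigma | exact: ltnW | exact: leq_trans (leq_pred i) (ltnW lt_iD)].
Qed.

Hypothesis b_gt0 : forall i, (i < D)%N -> (0 < b i)%N.

Lemma pseudo_cosine_unique (theta : R) (sigma tau : nat -> R) :
  pseudo_cosine D a b c theta sigma -> pseudo_cosine D a b c theta tau ->
  forall i, (i <= D)%N -> sigma i = tau i.
Proof.
move=> [sigma0 rec_sigma] [tau0 rec_tau].
suff eq_st i : (i <= D)%N -> sigma i = tau i /\ sigma i.-1 = tau i.-1.
  by move=> i /eq_st [].
elim: i => [|i IHi] le_iD; first by rewrite /= sigma0 tau0.
have [eq_i eq_predi] := IHi (ltnW le_iD); split=> //.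
have := rec_sigma i le_iD; have := rec_tau i le_iD; rewrite eq_i eq_predi => <-.
by move/addrI; apply: mulfI; rewrite pnatr_eq0 -lt0n b_gt0.
Qed.

Hypotheses (c0 : c 0 = 0%N) (a0 : a 0 = 0%N).
Hypothesis abc_sum : forall i, (i < D)%N -> (c i + a i + b i)%N = k.

Lemma pseudo_cosine_1 (theta : R) (sigma : nat -> R) :
  (0 < D)%N -> pseudo_cosine D a b c theta sigma -> theta = k%:R * sigma 1%N.
Proof.
move=> D_gt0 [sigma0 rec_sigma]; have := rec_sigma 0%N D_gt0.
by rewrite c0 a0 -(abc_sum D_gt0) c0 a0 sigma0 !mul0r !add0r mulr1.
Qed.

Hypothesis c_gt0 : forall i, (0 < i < D)%N -> (0 < c i)%N.

Lemma pseudo_cosine_consecutive_zeros (theta : R) (sigma : nat -> R) j :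
  pseudo_cosine D a b c theta sigma -> (j < D)%N ->
  sigma j = 0 -> sigma j.+1 <> 0.
Proof.
move=> [sigma0 rec_sigma]; elim: j => [|j IHj] lt_jD sigma_j sigma_Sj.
  by move: sigma0; rewrite sigma_j => /eqP; rewrite eq_sym oner_eq0.
apply: (IHj (ltnW lt_jD) _ sigma_j).
have := rec_sigma j.+1 lt_jD; rewrite sigma_j sigma_Sj /= !mulr0 !addr0.
by move/eqP; rewrite mulf_eq0 pnatr_eq0 eqn0Ngt c_gt0 //= => /eqP.
Qed.

Lemma square_pseudo_cosine_a_eq0 (theta eta : R) (sigma : nat -> R) :
  theta <> k%:R -> pseudo_cosine D a b c theta sigma ->
  pseudo_cosine D a b c eta (fun i => sigma i ^+ 2) ->
  forall i, (i < D)%N -> a i = 0%N.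
Proof.
move=> theta_neq_k ps psq i lt_iD; apply/eqP/negPn/negP => a_neq0.
have D_gt0 : (0 < D)%N := leq_ltn_trans (leq0n i) lt_iD.
have i_gt0 : (0 < i)%N by case: i lt_iD a_neq0 => //; rewrite a0.
have theta_1 := pseudo_cosine_1 D_gt0 ps.
have eta_1 := pseudo_cosine_1 D_gt0 psq.
have k_sum : k%:R = (c i)%:R + (a i)%:R + (b i)%:R :> R.
  by rewrite -(abc_sum lt_iD) !natrD.
have := ps.2 i lt_iD; have := psq.2 i lt_iD => /=.
set p := sigma i.-1; set q := sigma i; set r := sigma i.+1 => rec_sqr_i rec_i.
have [pq qr] : p = q /\ q = r.
  apply: (@weighted_variance3_eq0 _ (c i)%:R (a i)%:R (b i)%:R).
  - by rewrite ltr0n c_gt0 ?i_gt0.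
  - by rewrite ltr0n lt0n.
  - by rewrite ltr0n b_gt0.
  by rewrite rec_i rec_sqr_i -k_sum theta_1 eta_1 /=; ring.
have q0 : q = 0.
  apply/eqP/negP => /negP q_neq0; apply: theta_neq_k; apply: (mulIf q_neq0).
  by rewrite -rec_i pq -qr -!mulrDl -k_sum.
have lt_pred_iD : (i.-1 < D)%N := leq_ltn_trans (leq_pred i) lt_iD.
apply: (pseudo_cosine_consecutive_zeros ps lt_pred_iD); first by rewrite -/p pq.
by rewrite prednK.
Qed.

End PseudoCosine.

Theorem lemma6p1 (T : finType) (adj : rel T) (D k : nat) (a b c : nat -> nat)
    (R : realType) (theta theta' : R) :
  is_drg adj D k a b c ->
  (3 <= D)%N ->
  ~ bipartite_params D a ->
  ~ almost_bipartite_params D a ->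
  theta <> k%:R -> theta' <> k%:R ->
  tight_pair D a b c theta theta' ->
  theta <> theta'.
Proof.
move=> [[adj_sym adj_irr] conn diam reg drg] D_ge3 not_bip not_abip theta_neq_k _.
move=> [sigma [rho [ps prho [eta psrho]]]] eq_theta; subst theta'.
have D_gt0 : (0 < D)%N := ltnW (ltnW D_ge3).
have c0 := intersection_c0 conn diam drg D_gt0.
have a0 := intersection_a0 adj_irr conn diam drg D_gt0.
have b_gt0 := intersection_b_gt0 conn diam drg D_gt0.
have abc_sum i (lt_iD : (i < D)%N) :=
  intersection_sum adj_sym conn diam reg drg D_gt0 (ltnW lt_iD).
have c_gt0 i : (0 < i < D)%N -> (0 < c i)%N.
  case/andP => i_gt0 /ltnW le_iD.
  by rewrite (intersection_c_gt0 adj_sym conn diam drg D_gt0) ?i_gt0.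
have eq_sigma_rho := pseudo_cosine_unique b_gt0 ps prho.
have psq : pseudo_cosine D a b c eta (fun i => sigma i ^+ 2).
  by apply: eq_pseudo_cosine psrho => i /eq_sigma_rho <-.
have a_eq0 := square_pseudo_cosine_a_eq0 b_gt0 c0 a0 abc_sum c_gt0 theta_neq_k ps psq.
have [aD_eq0 | aD_neq0] := eqVneq (a D) 0%N.
  by apply: not_bip => i; rewrite leq_eqVlt => /predU1P [-> | /a_eq0].
by apply: not_abip; split; [apply/eqP | exact: a_eq0].
Qed.
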